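(* Let $W$ be a channel from $\{1,\dots,m\}$ to $\{1,\dots,n\}$. Then $\Lambda(W)$ is a bounded, closed convex polytope. For each $f\in\{10,01,11\}$, the set $\{C_f(\lambda):\lambda\in\Lambda(W)\}$ is a closed interval and $\overline{C}_f(W)$ is attained at some vertex of $\Lambda(W)$. Furthermore, $\underline{C}_{11}(W)$ is also attained at some vertex of $\Lambda(W)$.
   Context: A channel from a finite set $A$ to a finite set $B$ is a row-stochastic matrix. Let $\mathcal{X}=\{1,\dots,m\}$, $\mathcal{Y}=\{1,\dots,n\}$. A deterministic channel is a 0-1 channel, identified with a map $D:\mathcal{X}\to\mathcal{Y}$; $\mathcal{D}$ is the set of all of them, $\mathrm{rank}(D)$ the matrix rank. $\Lambda(W)=\{\lambda\text{ probability distribution on }\mathcal{D}: W=\sum_D\lambda_DD\}$. For a channel $K$ and input distribution $\mu$, $I(\mu,K)=\sum_x\mu_x D(K_{x,*}\|\mu K)$ (KL divergence, base 2). For a probability distribution $\lambda$ on $\mathcal{D}$: $C_{11}(\lambda)=\sum_D\lambda_D\log_2\mathrm{rank}(D)$; $C_{01}(\lambda)=\max_{\mu}\sum_D\lambda_D I(\mu,D)$ over distributions $\mu$ on $\mathcal{X}$; $C_{10}(\lambda)=\max_\mu I(\mu,V^\lambda)$ over distributions $\mu$ on the set $\mathcal{X}^{\mathcal{D}}$ of maps $u:\mathcal{D}\to\mathcal{X}$, where $V^\lambda_{u,y}=\sum_D\lambda_D D_{u(D),y}$. $\underline{C}_f(W)=\inf_{\lambda\in\Lambda(W)}C_f(\lambda)$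 and $\overline{C}_f(W)=\sup_{\lambda\in\Lambda(W)}C_f(\lambda)$. *)

From HB Require Import structures.
From mathcomp Require Import all_boot all_order all_algebra.
From mathcomp Require Import all_classical all_reals all_analysis.
Set Implicit Arguments. Unset Strict Implicit. Unset Printing Implicit Defensive.
Import Order.TTheory GRing.Theory Num.Theory.
Import numFieldNormedType.Exports.
Local Open Scope classical_set_scope.
Local Open Scope ring_scope.

Section Defs.
Variable R : realType.

Definition log2 (x : R) : R := ln x / ln 2.

Definition is_distr (T : finType) (p : T -> R) : Prop :=
  (forall t, 0 <= p t) /\ \sum_t p t = 1.

Definition is_channel (A B : finType) (K : A -> B -> R) : Prop :=
  forall a, is_distr (K a).

Definition out_distr (A B : finType) (mu : A -> R) (K : A -> B -> R) (b : B) : R :=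
  \sum_a mu a * K a b.

(* I(mu, K) = sum_x mu_x D(K_x || mu K), with 0 log(...) = 0 *)
Definition mutual_info (A B : finType) (mu : A -> R) (K : A -> B -> R) : R :=
  \sum_a \sum_b
     (if mu a * K a b == 0 then 0
      else mu a * K a b * log2 (K a b / out_distr mu K b)).

(* deterministic channels X -> Y, X = 'I_m, Y = 'I_n *)
Definition detmap (m n : nat) := {ffun 'I_m -> 'I_n}.

Definition detmx (m n : nat) (D : detmap m n) : 'M[R]_(m, n) :=
  \matrix_(x < m, y < n) ((D x == y)%:R).

Definition Lam (m n : nat) (W : 'M[R]_(m, n)) : set {ffun detmap m n -> R} :=
  [set l | is_distr l /\ W = \sum_D l D *: detmx D].

Definition C11 (m n : nat) (l : {ffun detmap m n -> R}) : R :=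
  \sum_D l D * log2 (\rank (detmx D))%:R.

Definition C01 (m n : nat) (l : {ffun detmap m n -> R}) : R :=
  sup [set v | exists mu : 'I_m -> R,
         is_distr mu /\ v = \sum_D l D * mutual_info mu (fun x y => detmx D x y)].

(* V^lambda : channel from maps u : D -> X to Y *)
Definition Vl (m n : nat) (l : {ffun detmap m n -> R})
  (u : {ffun detmap m n -> 'I_m}) (y : 'I_n) : R :=
  \sum_D l D * detmx D (u D) y.

Definition C10 (m n : nat) (l : {ffun detmap m n -> R}) : R :=
  sup [set v | exists mu : {ffun detmap m n -> 'I_m} -> R,
         is_distr mu /\ v = mutual_info mu (Vl l)].

Inductive capf := f10 | f01 | f11.

Definition Cf (f : capf) (m n : nat) (l : {ffun detmap m n -> R}) : R :=
  match f with f10 => C10 l | f01 => C01 l | f11 => C11 l end.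

Definition Cset (f : capf) (m n : nat) (W : 'M[R]_(m, n)) : set R :=
  [set Cf f l | l in Lam W].

Definition Cup (f : capf) (m n : nat) (W : 'M[R]_(m, n)) : R := sup (Cset f W).
Definition Clow (f : capf) (m n : nat) (W : 'M[R]_(m, n)) : R := inf (Cset f W).

Definition is_convex (T : finType) (S : set {ffun T -> R}) : Prop :=
  forall x y t, S x -> S y -> 0 <= t <= 1 -> S (t *: x + (1 - t) *: y).

Definition is_bounded (T : finType) (S : set {ffun T -> R}) : Prop :=
  exists M : R, forall x, S x -> forall t, `|x t| <= M.

Definition is_closed (T : finType) (S : set {ffun T -> R}) : Prop :=
  forall (u : nat -> {ffun T -> R}) (x : {ffun T -> R}),
    (forall k, S (u k)) -> (forall t, ((fun k : nat => u k t) : R^nat) @ \oo --> (x t : R)) -> S x.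

Definition is_polytope (T : finType) (S : set {ffun T -> R}) : Prop :=
  exists s : seq {ffun T -> R},
    S = [set x | exists c : 'I_(size s) -> R,
           (forall i, 0 <= c i) /\ \sum_i c i = 1 /\
           x = \sum_(i < size s) c i *: nth 0 s i].

Definition is_vertex (T : finType) (S : set {ffun T -> R}) (x : {ffun T -> R}) : Prop :=
  S x /\ forall y z t, S y -> S z -> 0 < t < 1 -> x = t *: y + (1 - t) *: z -> y = z.

End Defs.

(* Lambda(W) is the probability simplex on the deterministic maps, cut by the linear
   equations W = sum_D lambda_D D; hence it is convex, closed and bounded.  Call a point
   rigid when it is the only element of Lambda(W) supported in its own support.  Rigid
   points are extreme, and any other point x has a second decomposition y with support in
   that of x: moving from x along y - x and along x - y until a coordinate vanishes writes x
   as a convex combination of two points of smaller support.  By induction on the support,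
   Lambda(W) is the convex hull of its finitely many rigid points.

   The three capacities are convex and lower semicontinuous on Lambda(W): C11 is linear,
   C01 is a supremum of linear functions, and C10 is a supremum of the maps
   lambda |-> I(mu, V^lambda), which are continuous because x ln x is, and convex because
   V^lambda is linear in lambda and I(mu, .) is convex in the channel by the log-sum
   inequality.  A convex function on a polytope is maximal at a vertex, and a lower
   semicontinuous one is minimal somewhere on the compact set Lambda(W).  On the segment
   from a minimiser to a maximiser the sublevel sets are closed and convexity forbids jumps
   upwards, so every intermediate value is attained.  Finally -C11 is linear too, so C11 is
   also minimal at a vertex. *)

From HB Require Import structures.
From mathcomp Require Import all_boot all_order all_algebra.
From mathcomp Require Import all_classical all_reals all_analysis.
From mathcomp Require Import ring lra.
Import Order.TTheory GRing.Theory Num.Theory.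
Import numFieldNormedType.Exports.
Local Open Scope classical_set_scope.
Local Open Scope ring_scope.
Set Implicit Arguments. Unset Strict Implicit. Unset Printing Implicit Defensive.

Lemma scaleRE (R : realType) (a b : R) : a *: b = a * b.
Proof. by []. Qed.

Section Sequences.
Variable R : realType.

Lemma cvg_fsum (I : finType) (U : Type) (F : set_system U) {FF : Filter F}
    (f : I -> U -> R) (a : I -> R) :
  (forall i, f i @ F --> a i) -> (fun x => \sum_i f i x) @ F --> \sum_i a i.
Proof.
move=> fa; apply: (@cvg_big R^o I +%R 0 xpredT) => //.
exact: add_continuous.
Qed.

Lemma increasing_seq_geq (f : nat -> nat) : increasing_seq f -> forall k, (k <= f k)%N.
Proof.
move=> fi; elim=> // k IH; apply: leq_ltn_trans IH _.
by have /increasing_seqP := fi; apply.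
Qed.

Lemma cvg_subseq (u : R^nat) (l : R) (f : nat -> nat) :
  increasing_seq f -> u @ \oo --> l -> (u \o f) @ \oo --> l.
Proof.
move=> fi; apply: cvg_comp => A [N _ AN]; exists N => // k Nk.
exact: AN (leq_trans Nk (increasing_seq_geq fi k)).
Qed.

Variable T : finType.

Definition coord_cvg (u : nat -> {ffun T -> R}) (x : {ffun T -> R}) :=
  forall t, (fun k => u k t) @ \oo --> x t.

Lemma coord_cvg_form (u : nat -> {ffun T -> R}) x (a : T -> R) :
  coord_cvg u x -> (fun k => \sum_t u k t * a t) @ \oo --> \sum_t x t * a t.
Proof. by move=> ux; apply: cvg_fsum => t; apply: cvgMl. Qed.

Lemma coord_cvg_form_eq (u : nat -> {ffun T -> R}) x (a : T -> R) c :
  coord_cvg u x -> (forall k, \sum_t u k t * a t = c) -> \sum_t x t * a t = c.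
Proof.
move=> ux uc; have := coord_cvg_form (a := a) ux; under eq_fun do rewrite uc.
by move/(cvg_unique (@norm_hausdorff _ R^o) (cvg_cst c)).
Qed.

Lemma coord_bolzano_weierstrass (u : nat -> {ffun T -> R}) (B : R) :
  (forall k t, `|u k t| <= B) ->
  exists2 f : nat -> nat, increasing_seq f & exists x, coord_cvg (u \o f) x.
Proof.
move=> uB.
have [f fi fcvg] : exists2 f : nat -> nat, increasing_seq f &
    forall t, t \in enum T -> cvgn (fun k => u (f k) t).
  elim: (enum T) => [|t s [f fi fcvg]]; first by exists id.
  have bnd : bounded_fun (fun k => u (f k) t).
    exists B; split; first exact: num_real.
    by move=> M BM k _; apply: le_trans (uB _ t) (ltW BM).
  have [g gi gcvg] := bolzano_weierstrass bnd.
  exists (f \o g) => [a b /=|t']; first by rewrite fi; exact: gi.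
  rewrite inE => /predU1P [->|t's] //.
  by move/cvg_ex: (fcvg t' t's) => [l /(cvg_subseq gi) ?]; apply/cvg_ex; exists l.
exists f => //; exists [ffun t => limn (fun k => u (f k) t)] => t.
by rewrite ffunE; apply: (fcvg t); rewrite mem_enum.
Qed.

End Sequences.

Section SupInfSequences.
Variable R : realType.

Lemma cvg_to_sup (E : set R) : has_sup E ->
  exists2 u : R^nat, (forall k, E (u k)) & u @ \oo --> sup E.
Proof.
move=> hE; have adh k : exists t, E t /\ sup E - harmonic k < t.
  by have [t Et lt] := sup_adherent (harmonic_gt0 k) hE; exists t.
have [u uP] := choice adh; exists u => [k|]; first exact: (uP k).1.
apply: (@squeeze_cvgr _ _ _ _ (fun k => sup E - harmonic k) (cst (sup E))).
- apply: nearW => k; rewrite (ltW (uP k).2) /=.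
  by apply: ub_le_sup; [exact: hE.2 | exact: (uP k).1].
- by rewrite -[X in _ --> X]subr0; apply: cvgB; [exact: cvg_cst | exact: cvg_harmonic].
- exact: cvg_cst.
Qed.

Lemma cvg_to_inf (E : set R) : has_inf E ->
  exists2 u : R^nat, (forall k, E (u k)) & u @ \oo --> inf E.
Proof.
move=> hE; have adh k : exists t, E t /\ t < inf E + harmonic k.
  by have [t Et lt] := inf_adherent (harmonic_gt0 k) hE; exists t.
have [u uP] := choice adh; exists u => [k|]; first exact: (uP k).1.
apply: (@squeeze_cvgr _ _ _ _ (cst (inf E)) (fun k => inf E + harmonic k)).
- apply: nearW => k; rewrite (ltW (uP k).2) andbT.
  by apply: ge_inf; [exact: hE.2 | exact: (uP k).1].
- exact: cvg_cst.
- by rewrite -[X in _ --> X]addr0; apply: cvgD; [exact: cvg_cst | exact: cvg_harmonic].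
Qed.

End SupInfSequences.

Section Decompositions.
Variables (R : realType) (T : finType) (m n : nat).
Variables (M : T -> 'M[R]_(m, n)) (W : 'M[R]_(m, n)).

Definition decomp : set {ffun T -> R} :=
  [set l | is_distr l /\ W = \sum_D l D *: M D].

Lemma decomp_ge0 l : decomp l -> forall D, 0 <= l D.
Proof. by case=> [[]]. Qed.

Lemma decomp_sum l : decomp l -> \sum_D l D = 1.
Proof. by case=> [[]]. Qed.

Lemma decomp_le1 l : decomp l -> forall D, l D <= 1.
Proof.
move=> dl D; rewrite -(decomp_sum dl) (bigD1 D) //= lerDl.
by apply: sumr_ge0 => D' _; apply: decomp_ge0.
Qed.

Lemma decomp_comb (I : finType) (c : I -> R) (p : I -> {ffun T -> R}) :
  (forall i, 0 <= c i) -> \sum_i c i = 1 -> (forall i, decomp (p i)) ->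
  decomp (\sum_i c i *: p i).
Proof.
move=> c0 c1 dp; split; first split.
- move=> D; rewrite sum_ffunE; apply: sumr_ge0 => i _; rewrite ffunE.
  by rewrite mulr_ge0 // decomp_ge0.
- under eq_bigr do rewrite sum_ffunE.
  rewrite exchange_big -c1; apply: eq_bigr => i _.
  under eq_bigr do rewrite ffunE.
  by rewrite -mulr_sumr decomp_sum ?mulr1.
- under eq_bigr do rewrite sum_ffunE scaler_suml.
  rewrite exchange_big /= -[W]scale1r -c1 scaler_suml; apply: eq_bigr => i _.
  case: (dp i) => _ ->; rewrite scaler_sumr; apply: eq_bigr => D _.
  by rewrite ffunE scalerA.
Qed.

Lemma decomp_convex : is_convex decomp.
Proof.
move=> x y t dx dy /andP [t0 t1].
have := @decomp_comb bool (fun b => if b then t else 1 - t) (fun b => if b then x else y).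
rewrite !big_bool; apply => [[]||[]] //; first by rewrite subr_ge0.
by rewrite /= addrC subrK.
Qed.

Lemma decomp_bounded : is_bounded decomp.
Proof. by exists 1 => x dx D; rewrite ger0_norm ?decomp_le1 ?decomp_ge0. Qed.

Lemma decomp_closed : is_closed decomp.
Proof.
move=> u x du ux; split; first split.
- move=> D; apply: (ler_cvg_to (cvg_cst 0) (ux D)).
  by apply: nearW => k; apply: decomp_ge0.
- under eq_bigr do rewrite -[x _]mulr1.
  apply: (coord_cvg_form_eq ux) => k.
  by under eq_bigr do rewrite mulr1; apply: decomp_sum.
- apply/matrixP => i j; rewrite summxE; under eq_bigr do rewrite mxE.
  apply/esym/(coord_cvg_form_eq ux) => k.
  by case: (du k) => _ ->; rewrite summxE; apply: eq_bigr => D _; rewrite mxE.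
Qed.

End Decompositions.

Section Hull.
Variables (R : realType) (T : finType).

Definition hull (s : seq {ffun T -> R}) : set {ffun T -> R} :=
  [set x | exists c : 'I_(size s) -> R,
     (forall i, 0 <= c i) /\ \sum_i c i = 1 /\ x = \sum_(i < size s) c i *: nth 0 s i].

Lemma hull_mem s v : v \in s -> hull s v.
Proof.
rewrite -index_mem => vs; pose i0 := Ordinal vs.
exists (fun i => (i == i0)%:R); split; [|split].
- by move=> i; rewrite ler0n.
- by rewrite (bigD1 i0) //= eqxx big1 ?addr0 // => i /negbTE ->.
- rewrite (bigD1 i0) //= eqxx scale1r big1 ?addr0 ?nth_index -?index_mem //.
  by move=> i /negbTE ->; rewrite scale0r.
Qed.

Lemma hull_convex s : is_convex (hull s).
Proof.
move=> _ _ t [c [c0 [c1 ->]]] [c' [c'0 [c'1 ->]]] /andP [t0 t1].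
exists (fun i => t * c i + (1 - t) * c' i); split; [|split].
- by move=> i; rewrite addr_ge0 ?mulr_ge0 ?subr_ge0.
- by rewrite big_split /= -!mulr_sumr c1 c'1 !mulr1 addrC subrK.
- rewrite !scaler_sumr -big_split; apply: eq_bigr => i _.
  by rewrite /= !scalerA -scalerDl.
Qed.

End Hull.

Section Vertices.
Variables (R : realType) (T : finType) (m n : nat).
Variables (M : T -> 'M[R]_(m, n)) (W : 'M[R]_(m, n)).
Local Notation decomp := (decomp M W).

Definition supp (x : {ffun T -> R}) : {set T} := [set D | x D != 0].

Definition decomp_on (S : {set T}) : set {ffun T -> R} :=
  [set l | decomp l /\ forall D, D \notin S -> l D = 0].

Definition rigid (S : {set T}) := exists l, decomp_on S = [set l].

Definition rigid_point (S : {set T}) : {ffun T -> R} := xget 0 (decomp_on S).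

Lemma rigid_pointE S : rigid S -> decomp_on S = [set rigid_point S].
Proof.
move=> [l Sl]; rewrite /rigid_point Sl.
by rewrite (@xget_unique _ 0 [set l] l erefl (fun _ => id)).
Qed.

Definition vertex_seq : seq {ffun T -> R} :=
  map rigid_point [seq S <- enum {set T} | `[< rigid S >]].

Lemma vertex_seqP v : v \in vertex_seq -> exists2 S, rigid S & v = rigid_point S.
Proof.
by move=> /mapP [S]; rewrite mem_filter => /andP [/asboolP rS _] ->; exists S.
Qed.

Lemma rigid_point_vertex S : rigid S -> is_vertex decomp (rigid_point S).
Proof.
move=> /rigid_pointE eS; have [dp p0] : decomp_on S (rigid_point S) by rewrite eS.
split=> // y z t dy dz /andP [t0 t1] e.
have off D : D \notin S -> y D = 0 /\ z D = 0.
  move=> DS; move: (p0 D DS); rewrite e !ffunE !scaleRE.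
  have ty : 0 <= t * y D by rewrite mulr_ge0 ?(decomp_ge0 dy) ?ltW.
  have tz : 0 <= (1 - t) * z D by rewrite mulr_ge0 ?(decomp_ge0 dz) ?subr_ge0 ?ltW.
  move/eqP; rewrite paddr_eq0 // !mulf_eq0 (gt_eqF t0) subr_eq0 (gt_eqF t1).
  by move=> /andP [/eqP -> /eqP ->].
have [yS zS] : decomp_on S y /\ decomp_on S z by split; split=> // D /off [].
by move: yS zS; rewrite eS => -> ->.
Qed.

Lemma vertex_seq_vertex v : v \in vertex_seq -> is_vertex decomp v.
Proof. by move=> /vertex_seqP [S rS ->]; apply: rigid_point_vertex. Qed.

Definition null_dir (x d : {ffun T -> R}) :=
  [/\ \sum_D d D = 0, \sum_D d D *: M D = 0 & forall D, x D = 0 -> d D = 0].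

Lemma null_dirN x d : null_dir x d -> null_dir x (- d).
Proof.
case=> d0 dM xd; split.
- by under eq_bigr do rewrite ffunE; rewrite sumrN d0 oppr0.
- by under eq_bigr do rewrite ffunE scaleNr; rewrite sumrN dM oppr0.
- by move=> D /xd; rewrite ffunE => ->; rewrite oppr0.
Qed.

Lemma decomp_on_null_dir x y : decomp x -> decomp_on (supp x) y -> null_dir x (y - x).
Proof.
move=> dx [dy ys]; split.
- under eq_bigr do rewrite !ffunE.
  by rewrite sumrB (decomp_sum dy) (decomp_sum dx) subrr.
- under eq_bigr do rewrite !ffunE scalerBl.
  by rewrite sumrB; case: dy => _ <-; case: dx => _ <-; rewrite subrr.
- by move=> D xD; rewrite !ffunE xD ys ?subrr // inE xD eqxx.
Qed.

Lemma null_dir_neg x d : null_dir x d -> d != 0 -> exists D, d D < 0.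
Proof.
case=> d0 _ _ dn0; apply: contrapT => nneg; move/eqP: dn0; apply; apply/ffunP => D.
rewrite ffunE; apply: (psumr_eq0P (P := predT)) => // D' _.
by rewrite leNgt; apply/negP => dD'; apply: nneg; exists D'.
Qed.

Lemma decomp_move x d s : decomp x -> null_dir x d ->
  (forall D, 0 <= x D + s * d D) -> decomp (x + s *: d).
Proof.
move=> dx [d0 dM _] pos; split; first split.
- by move=> D; rewrite !ffunE.
- under eq_bigr do rewrite !ffunE.
  by rewrite big_split /= -mulr_sumr d0 mulr0 addr0 (decomp_sum dx).
- under eq_bigr do rewrite !ffunE scalerDl -scalerA.
  by rewrite big_split /= -scaler_sumr dM scaler0 addr0; case: dx.
Qed.

Lemma decomp_move_supp x d : decomp x -> null_dir x d -> d != 0 ->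
  exists2 s, 0 < s & decomp (x + s *: d) /\ (#|supp (x + s *: d)%R| < #|supp x|)%N.
Proof.
move=> dx dir dn0; have [_ _ xd] := dir.
have [D1 dD1] := null_dir_neg dir dn0.
have [D0 dD0 minD] := @arg_minP _ _ _ D1 (fun D => d D < 0) (fun D => x D / - d D) dD1.
(* The longest step along d that keeps x nonnegative; it zeroes the coordinate D0. *)
set s := x D0 / - d D0.
have xD0 : 0 < x D0.
  rewrite lt_def (decomp_ge0 dx) andbT; apply/eqP => /xd d0.
  by rewrite d0 ltxx in dD0.
have s0 : 0 < s by rewrite divr_gt0 ?oppr_gt0.
have pos D : 0 <= x D + s * d D.
  have [dD|dD] := ltP (d D) 0; last exact: addr_ge0 (decomp_ge0 dx D) (mulr_ge0 (ltW s0) dD).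
  by have := minD D dD; rewrite -/s ler_pdivlMr ?oppr_gt0 //; lra.
have xs0 : (x + s *: d) D0 = 0.
  by rewrite !ffunE scaleRE /s; field; rewrite lt_eqF.
have sub : supp (x + s *: d) \subset supp x :\ D0.
  apply/fintype.subsetP => D; rewrite !inE => nz; apply/andP; split.
    by apply: contraNneq nz => ->; rewrite xs0.
  by apply: contraNneq nz => xD; rewrite !ffunE xD (xd _ xD) scaler0 addr0.
exists s => //; split; first exact: decomp_move.
rewrite (cardsD1 D0 (supp x)) inE (gt_eqF xD0) /= add1n ltnS.
exact: subset_leq_card.
Qed.

Lemma decomp_sub_hull : decomp `<=` hull vertex_seq.
Proof.
move=> x; have [k] := ubnP #|supp x|; elim: k x => // k IH x supp_lt dx.
have xS : decomp_on (supp x) x by split=> // D; rewrite inE negbK => /eqP.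
have [rS|nrS] := pselect (rigid (supp x)).
  apply: hull_mem; move: xS; rewrite rigid_pointE // => ->.
  by apply: map_f; rewrite mem_filter mem_enum andbT; apply/asboolP.
have [y yS yx] : exists2 y, decomp_on (supp x) y & y != x.
  apply: contrapT => hn; apply: nrS; exists x; apply/seteqP; split=> [y yS|_ ->] //.
  by apply: contrapT => yx; apply: hn; exists y => //; apply/eqP.
have dir := decomp_on_null_dir dx yS.
have dn0 : y - x != 0 by rewrite subr_eq0.
have [s1 s1p [dx1 lt1]] := decomp_move_supp dx dir dn0.
have ndn0 : - (y - x) != 0 by rewrite oppr_eq0.
have [s2 s2p [dx2 lt2]] := decomp_move_supp dx (null_dirN dir) ndn0.
have h1 := IH _ (leq_trans lt1 (ltnSE supp_lt)) dx1.
have h2 := IH _ (leq_trans lt2 (ltnSE supp_lt)) dx2.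
have s12 : 0 < s1 + s2 by rewrite addr_gt0.
set a := s2 / (s1 + s2).
have a01 : 0 <= a <= 1.
  by rewrite divr_ge0 ?(ltW s2p) ?(ltW s12) //= ler_pdivrMr // mul1r; lra.
suff -> : x = a *: (x + s1 *: (y - x)) + (1 - a) *: (x + s2 *: - (y - x)).
  exact: hull_convex h1 h2 a01.
apply/ffunP => D; rewrite !ffunE !scaleRE /a.
by field; rewrite gt_eqF.
Qed.

Lemma decomp_polytope : decomp = hull vertex_seq.
Proof.
apply/seteqP; split; first exact: decomp_sub_hull.
move=> _ [c [c0 [c1 ->]]]; apply: decomp_comb => // i.
by case: (vertex_seq_vertex (mem_nth 0 (ltn_ord i))).
Qed.

End Vertices.

Section ConvexLsc.
Variables (R : realType) (T : finType) (m n : nat).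
Variables (M : T -> 'M[R]_(m, n)) (W : 'M[R]_(m, n)).
Local Notation decomp := (decomp M W).
Variable C : {ffun T -> R} -> R.

Definition convex_on := forall (I : finType) (c : I -> R) (p : I -> {ffun T -> R}),
  (forall i, 0 <= c i) -> \sum_i c i = 1 -> (forall i, decomp (p i)) ->
  C (\sum_i c i *: p i) <= \sum_i c i * C (p i).

Definition lsc_on := forall (u : nat -> {ffun T -> R}) x v,
  (forall k, decomp (u k)) -> decomp x -> coord_cvg u x ->
  (\forall k \near \oo, C (u k) <= v) -> C x <= v.

Lemma convex_on2 : convex_on -> forall x y a, decomp x -> decomp y -> 0 <= a <= 1 ->
  C (a *: x + (1 - a) *: y) <= a * C x + (1 - a) * C y.
Proof.
move=> cC x y a dx dy /andP [a0 a1].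
have := cC bool (fun b => if b then a else 1 - a) (fun b => if b then x else y).
rewrite !big_bool; apply=> [[]||[]] //; first by rewrite subr_ge0.
by rewrite /= addrC subrK.
Qed.

Lemma vertex_seq_gt0 : decomp !=set0 -> (0 < size (vertex_seq M W))%N.
Proof.
case=> x; rewrite decomp_polytope => -[c [_ [c1 _]]].
rewrite lt0n; apply/eqP => s0; move: c c1; rewrite s0 => c.
by rewrite big_ord0 => /eqP; rewrite eq_sym oner_eq0.
Qed.

Lemma convex_max_vertex : convex_on -> decomp !=set0 ->
  exists v, is_vertex decomp v /\ forall l, decomp l -> C l <= C v.
Proof.
move=> cC /vertex_seq_gt0 s_gt0; set s := vertex_seq M W.
have vs (i : 'I_(size s)) : decomp (nth 0 s i).
  by case: (vertex_seq_vertex (mem_nth 0 (ltn_ord i))).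
have [imax _ imaxP] := @arg_maxP _ _ _ (Ordinal s_gt0) xpredT (fun i => C (nth 0 s i)) isT.
exists (nth 0 s imax); split; first exact/vertex_seq_vertex/mem_nth.
move=> l; rewrite decomp_polytope => -[c [c0 [c1 ->]]].
apply: le_trans (cC _ _ _ c0 c1 vs) _.
rewrite -[leRHS]mul1r -c1 mulr_suml; apply: ler_sum => i _.
by apply: ler_wpM2l => //; apply: imaxP.
Qed.

Lemma lsc_attains_min : lsc_on -> decomp !=set0 ->
    (exists B, forall l, decomp l -> B <= C l) ->
  exists2 x, decomp x & forall l, decomp l -> C x <= C l.
Proof.
move=> lC [x0 dx0] [B CB].
set E := [set C l | l in decomp].
have hE : has_inf E by split; [exists (C x0), x0 | exists B => _ [l dl <-]; apply: CB].
have [c cE c_inf] := cvg_to_inf hE.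
have pick k : exists l, decomp l /\ C l = c k by have [l dl Cl] := cE k; exists l.
have [u uP] := choice pick.
have ub k t : `|u k t| <= 1.
  by rewrite ger0_norm ?(decomp_le1 (uP k).1) ?(decomp_ge0 (uP k).1).
have [f fi [x ux]] := coord_bolzano_weierstrass ub.
have dx : decomp x := decomp_closed (fun k => (uP (f k)).1) ux.
exists x => // l dl; apply: le_trans (ge_inf hE.2 (ex_intro2 _ _ l dl erefl)).
apply/ler_addgt0Pr => e e0; apply: (lC _ _ _ (fun k => (uP (f k)).1) dx ux).
have : (fun k => C (u (f k))) @ \oo --> inf E.
  by under eq_fun do rewrite (uP _).2; exact: cvg_subseq c_inf.
by move/cvgr_le; apply; rewrite ltrDl.
Qed.

Lemma convex_lsc_ivt : convex_on -> lsc_on -> forall xm v w, decomp xm -> decomp v ->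
  C xm <= w <= C v -> exists2 l, decomp l & C l = w.
Proof.
move=> cC lC xm v w dxm dv /andP [xw wv].
pose z t := t *: v + (1 - t) *: xm.
have dz t : 0 <= t <= 1 -> decomp (z t) by move=> t01; apply: decomp_convex.
pose S := [set t | (0 <= t <= 1) /\ C (z t) <= w].
have S0 : S 0 by split; [rewrite lexx ler01 | rewrite /z subr0 scale0r add0r scale1r].
have S1 : ubound S 1 by move=> t [/andP []].
have hS : has_sup S by split; [exists 0 | exists 1].
(* ts is the last time the segment lies in the sublevel set {C <= w}: lower
   semicontinuity gives C (z ts) <= w, and if C (z ts) < w, convexity on [z ts, v] keeps
   the segment in the sublevel set a little beyond ts. *)
set ts := sup S.
have ts01 : 0 <= ts <= 1 by rewrite (ub_le_sup hS.2 S0) (ge_sup hS.1 S1).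
have Cts : C (z ts) <= w.
  have [t St t_ts] := cvg_to_sup hS.
  apply: (lC (z \o t) (z ts) w) => [k||D|]; [exact: dz (St k).1 | exact: dz | |].
    have -> : z ts D = ts * v D + (1 - ts) * xm D by rewrite !ffunE.
    under eq_cvg do rewrite /= !ffunE.
    apply: cvgD; apply: cvgMl; first exact: t_ts.
    by apply: cvgB t_ts; exact: cvg_cst.
  by apply: nearW => k; exact: (St k).2.
exists (z ts); first exact: dz.
apply/eqP; rewrite eq_le Cts leNgt; apply/negP => Clt.
have Cv_gt : C (z ts) < C v := lt_le_trans Clt wv.
have ts1 : ts < 1.
  rewrite lt_neqAle (andP ts01).2 andbT; apply: contraTneq Clt => ts1.
  by rewrite -leNgt ts1 /z subrr scale0r addr0 scale1r.
pose a := (w - C (z ts)) / (C v - C (z ts)).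
have a0 : 0 < a by rewrite divr_gt0 ?subr_gt0.
have a1 : a <= 1 by rewrite ler_pdivrMr ?subr_gt0 // mul1r lerD2r.
have St' : S (ts + a * (1 - ts)).
  split; first by case/andP: ts01 => ? ?; apply/andP; split; nra.
  have -> : z (ts + a * (1 - ts)) = a *: v + (1 - a) *: z ts.
    by apply/ffunP => D; rewrite !ffunE !scaleRE; ring.
  apply: le_trans (convex_on2 cC dv (dz _ ts01) _) _; first by rewrite (ltW a0) a1.
  suff -> : a * C v + (1 - a) * C (z ts) = w by [].
  by rewrite /a; field; rewrite subr_eq0 gt_eqF.
have := ub_le_sup hS.2 St'; rewrite -/ts gerDl leNgt => /negP; apply.
by rewrite mulr_gt0 ?subr_gt0.
Qed.

End ConvexLsc.

Section ConvexLscRange.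
Variables (R : realType) (T : finType) (m n : nat).
Variables (M : T -> 'M[R]_(m, n)) (W : 'M[R]_(m, n)).
Local Notation decomp := (decomp M W).
Variable C : {ffun T -> R} -> R.

Lemma convex_lsc_range : convex_on M W C -> lsc_on M W C -> decomp !=set0 ->
    (exists B, forall l, decomp l -> B <= C l) ->
  (exists a b, a <= b /\ [set C l | l in decomp] = [set x | a <= x <= b]) /\
  (exists l, is_vertex decomp l /\ C l = sup [set C l | l in decomp]).
Proof.
move=> cC lC ne lb.
have [xm dxm xmP] := lsc_attains_min lC ne lb.
have [v [vv vP]] := convex_max_vertex cC ne.
have range : [set C l | l in decomp] = [set x | C xm <= x <= C v].
  apply/seteqP; split=> [_ [l dl <-]|w w_in]; first by rewrite /= xmP ?vP.
  by have [l dl <-] := convex_lsc_ivt cC lC dxm vv.1 w_in; exists l.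
have xm_v : C xm <= C v by apply: vP.
split; first by exists (C xm), (C v).
by exists v; split=> //; rewrite range -set_itvcc sup_itvcc.
Qed.

Lemma concave_min_vertex : convex_on M W (fun l => - C l) -> decomp !=set0 ->
  exists l, is_vertex decomp l /\ C l = inf [set C l | l in decomp].
Proof.
move=> cNC ne; have [v [vv vmin]] := convex_max_vertex cNC ne.
have lb : lbound [set C l | l in decomp] (C v) by move=> _ [l dl <-]; rewrite -lerN2 vmin.
have [dv _] := vv; exists v; split=> //; apply/eqP.
by rewrite eq_le lb_le_inf ?ge_inf //=; [exists (C v) | exists v | exists (C v), v].
Qed.

End ConvexLscRange.

Section LinearForms.
Variables (R : realType) (T : finType) (m n : nat).
Variables (M : T -> 'M[R]_(m, n)) (W : 'M[R]_(m, n)).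
Local Notation decomp := (decomp M W).
Variable a : T -> R.

Definition lform (l : {ffun T -> R}) := \sum_t l t * a t.

Lemma lform_comb (I : finType) (c : I -> R) (p : I -> {ffun T -> R}) :
  lform (\sum_i c i *: p i) = \sum_i c i * lform (p i).
Proof.
rewrite /lform; under eq_bigr do rewrite sum_ffunE mulr_suml.
rewrite exchange_big; apply: eq_bigr => i _; rewrite mulr_sumr.
by apply: eq_bigr => t _; rewrite ffunE mulrA.
Qed.

Lemma lform_convex : convex_on M W lform.
Proof. by move=> I c p _ _ _; rewrite lform_comb. Qed.

Lemma lform_concave : convex_on M W (fun l => - lform l).
Proof.
move=> I c p _ _ _; rewrite lform_comb -sumrN.
by under eq_bigr do rewrite -mulrN.
Qed.

Lemma lform_lsc : lsc_on M W lform.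
Proof.
move=> u x v _ _ ux uv.
exact: ler_cvg_to (coord_cvg_form (a := a) ux) (cvg_cst v) uv.
Qed.

Lemma lform_lbound : exists B, forall l, decomp l -> B <= lform l.
Proof.
exists (- \sum_t `|a t|) => l dl; rewrite -sumrN; apply: ler_sum => t _.
rewrite lerNl; apply: le_trans (_ : `|l t * a t| <= _); first by rewrite -normrN ler_norm.
rewrite normrM ger0_norm ?(decomp_ge0 dl) //.
by apply: ler_piMl; [exact: normr_ge0 | exact: decomp_le1 dl t].
Qed.

Lemma lform_range : decomp !=set0 ->
  (exists a b, a <= b /\ [set lform l | l in decomp] = [set x | a <= x <= b]) /\
  (exists l, is_vertex decomp l /\ lform l = sup [set lform l | l in decomp]).
Proof. by move=> ne; apply: convex_lsc_range lform_convex lform_lsc ne lform_lbound. Qed.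

End LinearForms.

Section EntropyFunction.
Variable R : realType.

Definition xlnx (x : R) := x * ln x.

Lemma ln2_gt0 : 0 < ln (2 : R).
Proof. by rewrite ln_gt0 // ltr1n. Qed.

Lemma subr1V_le_ln (z : R) : 0 < z -> 1 - z^-1 <= ln z.
Proof.
move=> z0; have zV0 : 0 < z^-1 by rewrite invr_gt0.
have : -1 < z^-1 - 1 by lra.
by move/le_ln1Dx; rewrite addrC subrK lnV ?posrE //; lra.
Qed.

Lemma xlnx_ge (x : R) : 0 <= x -> x - 1 <= xlnx x.
Proof.
rewrite le0r => /predU1P [->|x0]; first by rewrite /xlnx mul0r sub0r lerN10.
by have := subr1V_le_ln x0; rewrite -(ler_pM2l x0) mulrBr mulr1 mulfV ?gt_eqF.
Qed.

Lemma xlnx_le0 (x : R) : 0 <= x <= 1 -> xlnx x <= 0.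
Proof. by move=> /andP [x0 x1]; rewrite /xlnx mulr_ge0_le0 // ln_le0. Qed.

Lemma xlnx_bound (x : R) : 0 <= x <= 1 -> -1 <= xlnx x <= 0.
Proof.
move=> x01; rewrite xlnx_le0 // andbT; case/andP: x01 => x0 x1.
by apply: le_trans (xlnx_ge x0); lra.
Qed.

Lemma oppr_xlnx_lt (y : R) : 0 < y -> - xlnx y < 2 * Num.sqrt y.
Proof.
move=> y0; set s := Num.sqrt y; have s0 : 0 < s by rewrite sqrtr_gt0.
have lnVs : - ln s < s^-1 by rewrite -lnV ?posrE // ln_sublinear // invr_gt0.
have -> : - xlnx y = 2 * s ^+ 2 * - ln s.
  by rewrite /xlnx -{1 2}[y]sqr_sqrtr ?ltW // -/s lnXn // mulr2n; ring.
have -> : 2 * s = 2 * s ^+ 2 * s^-1 by field; rewrite gt_eqF.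
by rewrite ltr_pM2l // mulr_gt0 // exprn_gt0.
Qed.

Lemma continuous_xlnx : continuous xlnx.
Proof.
move=> x; have [x0|x0|->] := ltgtP x 0.
- apply: (near_cst_continuous 0); near=> y; rewrite /xlnx ln0 ?mulr0 //.
  by apply: ltW; near: y; exact: (cvgr_lt x cvg_id).
- by apply: cvgM; [exact: cvg_id | exact: continuous_ln].
apply/cvgrPdist_lt => e e0.
have d0 : 0 < Num.min 1 ((e / 2) ^+ 2) by rewrite lt_min ltr01 exprn_gt0 ?divr_gt0.
apply/nbhs_ballP; exists (Num.min 1 ((e / 2) ^+ 2)) => // y /=.
rewrite /ball /= sub0r normrN {1}/xlnx mul0r sub0r normrN => y_lt.
have [y0|y0] := leP y 0; first by rewrite /xlnx ln0 // mulr0 normr0.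
move: y_lt; rewrite gtr0_norm // lt_min => /andP [y1 ye].
rewrite ler0_norm ?xlnx_le0 ?ltW //; apply: lt_trans (oppr_xlnx_lt y0) _.
rewrite -ltr_pdivlMl // mulrC; apply: lt_le_trans (_ : Num.sqrt ((e / 2) ^+ 2) <= _).
  by rewrite ltr_sqrt // exprn_gt0 ?divr_gt0.
by rewrite sqrtr_sqr ger0_norm // divr_ge0 // (ltW e0).
Unshelve. all: by end_near.
Qed.

End EntropyFunction.

Section MutualInformation.
Variable R : realType.

Definition klterm (x y : R) := if x == 0 then 0 else x * log2 (x / y).

(* The bound ln z >= 1 - 1/z at z = x / (y q); summed with q = (sum x) / (sum y) it gives
   the log-sum inequality. *)
Lemma klterm_tangent (x y q : R) : 0 <= x -> 0 <= y -> (0 < x -> 0 < y) -> 0 < q ->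
  x * log2 q + (x - y * q) / ln 2 <= klterm x y.
Proof.
move=> x0 y0 xy q0; have L := @ln2_gt0 R; rewrite /klterm.
have [->|xn0] := eqVneq x 0.
  by rewrite mul0r add0r sub0r mulNr oppr_le0 divr_ge0 ?mulr_ge0 // ltW.
have xp : 0 < x by rewrite lt0r xn0.
have yp := xy xp.
have r0 : 0 < x / y / q by rewrite !divr_gt0.
have key : x * (1 - (x / y / q)^-1) <= x * ln (x / y / q) by rewrite ler_pM2l // subr1V_le_ln.
have e : x * (1 - (x / y / q)^-1) = x - y * q by field; rewrite !gt_eqF.
rewrite e ln_div ?posrE ?divr_gt0 // mulrBr in key.
rewrite /log2 !mulrA -mulrDl ler_pM2r ?invr_gt0 //; lra.
Qed.

Lemma klterm_scale (c x y : R) : 0 <= c -> c * klterm x y = klterm (c * x) (c * y).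
Proof.
rewrite le0r => /predU1P [->|c0]; first by rewrite /klterm !mul0r eqxx.
rewrite /klterm mulf_eq0 (gt_eqF c0) /=; case: eqP => _; first by rewrite mulr0.
by rewrite -mulf_div divff ?gt_eqF // mul1r mulrA.
Qed.

Lemma log_sum_inequality (I : finType) (a b : I -> R) :
  (forall i, 0 <= a i) -> (forall i, 0 <= b i) -> (forall i, 0 < a i -> 0 < b i) ->
  klterm (\sum_i a i) (\sum_i b i) <= \sum_i klterm (a i) (b i).
Proof.
move=> a0 b0 ab; set sa := \sum_i a i; set sb := \sum_i b i.
have [sa0|sa_n0] := eqVneq sa 0.
  rewrite /klterm sa0 eqxx; apply: sumr_ge0 => i _.
  by rewrite (psumr_eq0P (fun i _ => a0 i) sa0) // eqxx.
have [i ai] : exists i, 0 < a i.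
  apply: contrapT => nai; move/eqP: sa_n0; apply; apply: big1 => i _.
  by apply/eqP; rewrite eq_le a0 andbT leNgt; apply/negP => ?; apply: nai; exists i.
have sa_gt0 : 0 < sa by rewrite lt0r sa_n0 sumr_ge0.
have sb_gt0 : 0 < sb.
  by apply: lt_le_trans (ab i ai) _; rewrite /sb (bigD1 i) //= lerDl sumr_ge0.
have q0 : 0 < sa / sb by rewrite divr_gt0.
apply: le_trans (ler_sum _ (fun i _ => klterm_tangent (a0 i) (b0 i) (ab i) q0)).
rewrite big_split /= -mulr_suml -mulr_suml sumrB -mulr_suml -/sa -/sb.
have -> : sa - sb * (sa / sb) = 0 by field; rewrite gt_eqF.
by rewrite mul0r addr0 /klterm (negbTE sa_n0).
Qed.

Variables (A B : finType).

Lemma out_distr_ge (mu : A -> R) (K : A -> B -> R) a b :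
  (forall a, 0 <= mu a) -> (forall a b, 0 <= K a b) ->
  mu a * K a b <= out_distr mu K b.
Proof.
move=> mu0 K0; rewrite /out_distr (bigD1 a) //= lerDl.
by apply: sumr_ge0 => a' _; rewrite mulr_ge0.
Qed.

Lemma mutual_info_klterm (mu : A -> R) (K : A -> B -> R) :
  mutual_info mu K = \sum_a \sum_b klterm (mu a * K a b) (mu a * out_distr mu K b).
Proof.
apply: eq_bigr => a _; apply: eq_bigr => b _; rewrite /klterm.
case: ifPn => //; rewrite mulf_eq0 negb_or => /andP [mu0 _].
by rewrite -mulf_div divff // mul1r.
Qed.

Lemma mutual_info_entropy (mu : A -> R) (K : A -> B -> R) :
  (forall a, 0 <= mu a) -> (forall a b, 0 <= K a b) ->
  mutual_info mu K * ln 2 =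
  \sum_a mu a * \sum_b xlnx (K a b) - \sum_b xlnx (out_distr mu K b).
Proof.
move=> mu0 K0.
have term a b :
    (if mu a * K a b == 0 then 0
     else mu a * K a b * log2 (K a b / out_distr mu K b)) * ln 2 =
    mu a * xlnx (K a b) - mu a * K a b * ln (out_distr mu K b).
  case: ifPn => [/eqP muK0|muK0]; first by rewrite /xlnx mulrA muK0 !mul0r subrr.
  have muKp : 0 < mu a * K a b by rewrite lt0r muK0 mulr_ge0.
  have outp : 0 < out_distr mu K b by apply: lt_le_trans muKp (out_distr_ge _ _ _ _).
  have Kp : 0 < K a b.
    by move: muK0; rewrite mulf_eq0 negb_or => /andP [_ Kn0]; rewrite lt0r Kn0 K0.
  rewrite /log2 ln_div ?posrE // /xlnx -mulrA mulfVK ?gt_eqF ?ln2_gt0 //.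
  by rewrite mulrBr !mulrA.
rewrite /mutual_info mulr_suml.
under eq_bigr do rewrite mulr_suml; under eq_bigr do under eq_bigr do rewrite term.
under eq_bigr do rewrite sumrB -mulr_sumr.
rewrite sumrB exchange_big /=; congr (_ - _); apply: eq_bigr => b _.
by rewrite /xlnx /out_distr mulr_suml.
Qed.

Lemma mutual_info_bound (mu : A -> R) (K : A -> B -> R) :
  is_distr mu -> (forall a b, 0 <= K a b <= 1) -> `|mutual_info mu K| <= #|B|%:R / ln 2.
Proof.
move=> [mu0 mu1] K01; have K0 a b : 0 <= K a b by case/andP: (K01 a b).
have out01 b : 0 <= out_distr mu K b <= 1.
  rewrite sumr_ge0 /= => [|a _]; last by rewrite mulr_ge0.
  rewrite -mu1; apply: ler_sum => a _; rewrite ler_piMr //.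
  by case/andP: (K01 a b).
have xlnx_sum (p : B -> R) : (forall b, 0 <= p b <= 1) ->
    - #|B|%:R <= \sum_b xlnx (p b) <= 0.
  move=> p01; rewrite -sumr_const -sumrN; apply/andP; split.
    by apply: ler_sum => b _; case/andP: (xlnx_bound (p01 b)).
  by apply: sumr_le0 => b _; case/andP: (xlnx_bound (p01 b)).
have /andP [H1lo H1hi] : - #|B|%:R <= \sum_a mu a * \sum_b xlnx (K a b) <= 0.
  apply/andP; split; last first.
    apply: sumr_le0 => a _; apply: mulr_ge0_le0 => //.
    by case/andP: (xlnx_sum _ (K01 a)).
  apply: le_trans (_ : \sum_a mu a * - #|B|%:R <= _); first by rewrite -mulr_suml mu1 mul1r.
  apply: ler_sum => a _; apply: ler_wpM2l => //.
  by case/andP: (xlnx_sum _ (K01 a)).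
have /andP [H2lo H2hi] := xlnx_sum _ out01.
have L := @ln2_gt0 R.
rewrite ler_pdivlMr // -[ln 2 in leLHS]gtr0_norm // -normrM mutual_info_entropy //.
by rewrite ler_norml; apply/andP; split; lra.
Qed.

Lemma mutual_info_cvg (mu : A -> R) (K : nat -> A -> B -> R) (K0 : A -> B -> R) :
  (forall a, 0 <= mu a) -> (forall k a b, 0 <= K k a b) -> (forall a b, 0 <= K0 a b) ->
  (forall a b, (fun k => K k a b) @ \oo --> K0 a b) ->
  (fun k => mutual_info mu (K k)) @ \oo --> mutual_info mu K0.
Proof.
move=> mu0 K_ge0 K0_ge0 KK0.
have MIE (K' : A -> B -> R) : (forall a b, 0 <= K' a b) -> mutual_info mu K' =
    (\sum_a mu a * \sum_b xlnx (K' a b) - \sum_b xlnx (out_distr mu K' b)) / ln 2.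
  by move=> K'0; rewrite -mutual_info_entropy // mulfK // gt_eqF // ln2_gt0.
rewrite MIE //; under eq_fun do rewrite MIE //.
have xlnx_cvg (u : R^nat) l : u @ \oo --> l -> (fun k => xlnx (u k)) @ \oo --> xlnx l.
  by apply: continuous_cvg; apply: continuous_xlnx.
have out_cvg b : (fun k => out_distr mu (K k) b) @ \oo --> out_distr mu K0 b.
  by apply: cvg_fsum => a; apply: cvgMr.
apply: cvgMl; apply: cvgB.
  by apply: cvg_fsum => a; apply: cvgMr; apply: cvg_fsum => b; exact: xlnx_cvg (KK0 a b).
by apply: cvg_fsum => b; exact: xlnx_cvg (out_cvg b).
Qed.

Lemma mutual_info_convex (I : finType) (c : I -> R) (mu : A -> R) (K : I -> A -> B -> R) :
  (forall a, 0 <= mu a) -> (forall i, 0 <= c i) -> (forall i a b, 0 <= K i a b) ->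
  mutual_info mu (fun a b => \sum_i c i * K i a b) <= \sum_i c i * mutual_info mu (K i).
Proof.
move=> mu0 c0 K0; rewrite mutual_info_klterm.
under [leRHS]eq_bigr do rewrite mutual_info_klterm mulr_sumr.
rewrite [leRHS]exchange_big; apply: ler_sum => a _.
under [leRHS]eq_bigr do rewrite mulr_sumr.
rewrite [leRHS]exchange_big; apply: ler_sum => b _.
under [leRHS]eq_bigr do rewrite klterm_scale //.
have -> : mu a * \sum_i c i * K i a b = \sum_i c i * (mu a * K i a b).
  by rewrite mulr_sumr; apply: eq_bigr => i _; rewrite mulrCA.
have -> : mu a * out_distr mu (fun a b => \sum_i c i * K i a b) b =
          \sum_i c i * (mu a * out_distr mu (K i) b).
  rewrite /out_distr mulr_sumr; under eq_bigr do rewrite !mulr_sumr.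
  rewrite exchange_big /=; apply: eq_bigr => i _.
  by rewrite !mulr_sumr; apply: eq_bigr => a' _; ring.
apply: log_sum_inequality => i.
- by rewrite !mulr_ge0.
- by rewrite !mulr_ge0 // sumr_ge0 // => a' _; rewrite mulr_ge0.
- move=> pos; have ci : 0 < c i.
    by rewrite lt0r c0 andbT; apply: contraTneq pos => ->; rewrite mul0r ltxx.
  have muK : 0 < mu a * K i a b by rewrite -(pmulr_rgt0 _ ci).
  have mua : 0 < mu a.
    by rewrite lt0r mu0 andbT; apply: contraTneq muK => ->; rewrite mul0r ltxx.
  rewrite !mulr_gt0 //; apply: lt_le_trans muK _.
  exact: (@out_distr_ge mu (K i) a b mu0 (K0 i)).
Qed.

End MutualInformation.

Section SupremumOfConvex.
Variables (R : realType) (T : finType) (m n : nat).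
Variables (M : T -> 'M[R]_(m, n)) (W : 'M[R]_(m, n)).
Local Notation decomp := (decomp M W).
Variables (U : Type) (P : U -> Prop) (g : U -> {ffun T -> R} -> R) (B : R).
Hypothesis P_ne : exists mu, P mu.
Hypothesis g_bound : forall mu l, P mu -> decomp l -> `|g mu l| <= B.
Hypothesis g_cvg : forall mu u x, P mu -> (forall k, decomp (u k)) -> decomp x ->
  coord_cvg u x -> (fun k => g mu (u k)) @ \oo --> g mu x.
Hypothesis g_convex : forall mu, P mu -> convex_on M W (g mu).

Definition sup_family l := sup [set v | exists mu, P mu /\ v = g mu l].

Lemma sup_family_ge mu l : P mu -> decomp l -> g mu l <= sup_family l.
Proof.
move=> Pmu dl; apply: ub_le_sup; last by exists mu.
by exists B => _ [mu' [Pmu' ->]]; apply: le_trans (ler_norm _) (g_bound Pmu' dl).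
Qed.

Lemma sup_family_le l v : (forall mu, P mu -> g mu l <= v) -> sup_family l <= v.
Proof.
move=> gv; apply: ge_sup => [|_ [mu [Pmu ->]]]; last exact: gv.
by have [mu Pmu] := P_ne; exists (g mu l), mu.
Qed.

Lemma sup_family_convex : convex_on M W sup_family.
Proof.
move=> I c p c0 c1 dp; apply: sup_family_le => mu Pmu.
apply: le_trans (g_convex Pmu c0 c1 dp) _; apply: ler_sum => i _.
by apply: ler_wpM2l => //; apply: sup_family_ge.
Qed.

Lemma sup_family_lsc : lsc_on M W sup_family.
Proof.
move=> u x v du dx ux uv; apply: sup_family_le => mu Pmu.
apply: ler_cvg_to (g_cvg Pmu du dx ux) (cvg_cst v) _.
by apply: filterS uv => k; apply/le_trans/sup_family_ge.
Qed.

Lemma sup_family_range : decomp !=set0 ->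
  (exists a b, a <= b /\ [set sup_family l | l in decomp] = [set x | a <= x <= b]) /\
  (exists l, is_vertex decomp l /\ sup_family l = sup [set sup_family l | l in decomp]).
Proof.
move=> ne; apply: convex_lsc_range sup_family_convex sup_family_lsc ne _.
exists (- B) => l dl; have [mu Pmu] := P_ne; apply: le_trans (sup_family_ge Pmu dl).
by rewrite lerNl; apply: le_trans (g_bound Pmu dl); rewrite -normrN ler_norm.
Qed.

End SupremumOfConvex.

Lemma delta_distr (R : realType) (A : finType) (a0 : A) :
  is_distr (fun a => (a == a0)%:R : R).
Proof.
split=> [a|]; first by rewrite ler0n.
by rewrite (bigD1 a0) //= eqxx big1 ?addr0 // => a /negbTE ->.
Qed.

Section Capacities.
Variables (R : realType) (m n : nat) (W : 'M[R]_(m, n)).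
Local Notation T := (detmap m n).
Local Notation decomp := (decomp (fun D : T => detmx R D) W).

Lemma detmx01 (D : T) x y : 0 <= detmx R D x y <= 1.
Proof. by rewrite mxE; case: eqP; rewrite ?lexx ?ler01. Qed.

Lemma product_decomp : is_channel (fun x y => W x y) ->
  decomp [ffun D : T => \prod_x W x (D x)].
Proof.
move=> hW; have W0 x y : 0 <= W x y by case: (hW x) => W0 _; apply: W0.
have W1 x : \sum_y W x y = 1 by case: (hW x).
split; first split.
- by move=> D; rewrite ffunE prodr_ge0.
- under eq_bigr do rewrite ffunE.
  by rewrite -bigA_distr_bigA /= big1.
apply/matrixP => i j; rewrite summxE.
pose G x y := if x == i then W x y * (y == j)%:R else W x y.
transitivity (\sum_(D : T) \prod_x G x (D x)).
  have rest : \prod_(x | x != i) \sum_y G x y = 1.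
    by apply: big1 => x /negbTE xi; rewrite /G xi W1.
  rewrite -bigA_distr_bigA (bigD1 i) //= rest mulr1 /G eqxx (bigD1 j) //= eqxx mulr1.
  by rewrite big1 ?addr0 // => y /negbTE ->; rewrite mulr0.
apply: eq_bigr => D _; rewrite ffunE !mxE (bigD1 i) //= [in RHS](bigD1 i) //= /G eqxx.
by rewrite mulrAC; congr (_ * _ * _); apply: eq_bigr => x /negbTE ->.
Qed.

Definition info01 (mu : 'I_m -> R) (l : {ffun T -> R}) : R :=
  \sum_D l D * mutual_info mu (fun x y => detmx R D x y).

Lemma info01_bound mu l : is_distr mu -> decomp l -> `|info01 mu l| <= #|'I_n|%:R / ln 2.
Proof.
move=> dmu dl; apply: le_trans (ler_norm_sum _ _ _) _.
apply: le_trans (_ : \sum_D l D * (#|'I_n|%:R / ln 2) <= _).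
  apply: ler_sum => D _; rewrite normrM ger0_norm ?(decomp_ge0 dl) //.
  apply: ler_wpM2l; first exact: decomp_ge0 dl D.
  by apply: mutual_info_bound => // x y; apply: detmx01.
by rewrite -mulr_suml (decomp_sum dl) mul1r.
Qed.

Lemma C01_range : (0 < m)%N -> decomp !=set0 ->
  (exists a b, a <= b /\ [set C01 l | l in decomp] = [set x | a <= x <= b]) /\
  (exists l, is_vertex decomp l /\ C01 l = sup [set C01 l | l in decomp]).
Proof.
move=> m0; apply: (sup_family_range (g := info01) (B := #|'I_n|%:R / ln 2)).
- by exists (fun x => (x == Ordinal m0)%:R); apply: delta_distr.
- by move=> mu l dmu dl; apply: info01_bound.
- by move=> mu u x _ _ _ ux; apply: coord_cvg_form.
- by move=> mu _; apply: lform_convex.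
Qed.

Lemma Vl_ge0 (l : {ffun T -> R}) : (forall D, 0 <= l D) -> forall u y, 0 <= Vl l u y.
Proof.
move=> l0 u y; apply: sumr_ge0 => D _.
by rewrite mulr_ge0 //; case/andP: (detmx01 D (u D) y).
Qed.

Lemma Vl01 l : decomp l -> forall u y, 0 <= Vl l u y <= 1.
Proof.
move=> dl u y; rewrite Vl_ge0 /=; last exact: decomp_ge0 dl.
rewrite -(decomp_sum dl); apply: ler_sum => D _.
by apply: ler_piMr; [exact: decomp_ge0 dl D | exact: (andP (detmx01 D (u D) y)).2].
Qed.

Definition info10 (mu : {ffun T -> 'I_m} -> R) (l : {ffun T -> R}) : R :=
  mutual_info mu (Vl l).

Lemma C10_range : (0 < m)%N -> decomp !=set0 ->
  (exists a b, a <= b /\ [set C10 l | l in decomp] = [set x | a <= x <= b]) /\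
  (exists l, is_vertex decomp l /\ C10 l = sup [set C10 l | l in decomp]).
Proof.
move=> m0; apply: (sup_family_range (g := info10) (B := #|'I_n|%:R / ln 2)).
- by exists (fun u => (u == [ffun=> Ordinal m0])%:R); apply: delta_distr.
- by move=> mu l dmu dl; apply: mutual_info_bound => //; apply: Vl01.
- move=> mu u x [mu0 _] du dx ux; apply: mutual_info_cvg => //.
  + by move=> k; apply: Vl_ge0; exact: decomp_ge0 (du k).
  + by apply: Vl_ge0; exact: decomp_ge0 dx.
  + by move=> v y; apply: coord_cvg_form.
- move=> mu [mu0 _] I c p c0 _ dp; rewrite /info10.
  have -> : Vl (\sum_i c i *: p i) = fun v y => \sum_i c i * Vl (p i) v y.
    by apply/funext => v; apply/funext => y; apply: lform_comb.
  apply: mutual_info_convex => // i; apply: Vl_ge0; exact: decomp_ge0 (dp i).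
Qed.

Lemma C11_range : decomp !=set0 ->
  (exists a b, a <= b /\ [set C11 l | l in decomp] = [set x | a <= x <= b]) /\
  (exists l, is_vertex decomp l /\ C11 l = sup [set C11 l | l in decomp]).
Proof. exact: lform_range. Qed.

Lemma C11_min_vertex : decomp !=set0 ->
  exists l, is_vertex decomp l /\ C11 l = inf [set C11 l | l in decomp].
Proof.
apply: concave_min_vertex.
exact: (@lform_concave _ _ _ _ _ W (fun D : T => log2 (\rank (detmx R D))%:R)).
Qed.

End Capacities.

Theorem theorem7 (R : realType) (m n : nat) (hm : (0 < m)%N) (hn : (0 < n)%N)
  (W : 'M[R]_(m, n)) (hW : is_channel (fun x y => W x y)) :
  [/\ is_convex (Lam W) /\ is_closed (Lam W),
      is_bounded (Lam W), is_polytope (Lam W),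
      (forall f : capf,
         (exists a b : R, a <= b /\ Cset f W = [set x | a <= x <= b]) /\
         (exists l, is_vertex (Lam W) l /\ Cf f l = Cup f W))
    & (exists l, is_vertex (Lam W) l /\ Cf f11 l = Clow f11 W)].
Proof.
have ne : Lam W !=set0 by eexists; apply: product_decomp.
split.
- by split; [exact: decomp_convex | exact: decomp_closed].
- exact: decomp_bounded.
- by eexists; apply: decomp_polytope.
- by case; [apply: C10_range | apply: C01_range | apply: C11_range].
- exact: C11_min_vertex ne.
Qed.
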